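(* Let $q\ge2$ be an integer and $n\ge1$. On $(n+1)$ qudigits one has $$M_q=\big(H_q^{\otimes(n+1)}\big)^{-1}\,F_q^{-1}\,H_q^{\otimes(n+1)}.$$
   Context: Let $D=\{0,\ldots,q-1\}$. A qudigit is a unit vector $\sum_{k=0}^{q-1}c_k|k\rangle$ in a $q$-dimensional space with orthonormal basis $|0\rangle,\ldots,|q-1\rangle$. The $n$-ary modular addition operator $M_q$ acts on basis states by $M_q|x_1,\ldots,x_n,b\rangle=|x_1,\ldots,x_n,(b+x_1+\cdots+x_n)\bmod q\rangle$. The $n$-ary base-$q$ fanout operator $F_q$ acts by $F_q|x_1,\ldots,x_n,b\rangle=|(x_1+b)\bmod q,\ldots,(x_n+b)\bmod q,b\rangle$. The quantum Fourier transform $H_q$ on one qudigit is $H_q|a\rangle=\frac1{\sqrt q}\sum_{b=0}^{q-1}\zeta^{ab}|b\rangle$ with $\zeta=e^{2\pi i/q}$. *)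

From mathcomp Require Import all_boot all_order all_algebra.
From mathcomp Require Import reals trigo.
From mathcomp Require Import complex.
Set Implicit Arguments. Unset Strict Implicit. Unset Printing Implicit Defensive.
Import Order.TTheory GRing.Theory Num.Theory.
Local Open Scope ring_scope.
Local Open Scope complex_scope.

(* Computational basis of (n+1) qudigits: |x_1,...,x_n,b>, encoded as a map
   'I_n.+1 -> 'I_q; positions 0..n-1 are x_1..x_n and position n (ord_max)
   is the last digit b. *)
Definition basis (q n : nat) : finType := {ffun 'I_n.+1 -> 'I_q}.

(* An operator on the (q^(n+1))-dimensional space, as a square matrix
   indexed by the enumeration of the basis; entry (y, x) is <y| A |x>. *)
Definition opmx (R : realType) (q n : nat)
    (A : basis q n -> basis q n -> R[i]) : 'M[R[i]]_#|basis q n| :=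
  \matrix_(i, j) A (enum_val i) (enum_val j).

Definition sumx (q n : nat) (x : basis q n) : nat :=
  \sum_(i < n.+1 | i != ord_max) (x i : nat).

Definition Mq_mx (R : realType) (q n : nat) : 'M[R[i]]_#|basis q n| :=
  opmx (fun y x : basis q n =>
    ([forall i : 'I_n.+1, (i != ord_max) ==> (y i == x i :> nat)]
     && ((y ord_max : nat) == ((x ord_max : nat) + sumx x) %% q)%N)%:R).

Definition Fq_mx (R : realType) (q n : nat) : 'M[R[i]]_#|basis q n| :=
  opmx (fun y x : basis q n =>
    ([forall i : 'I_n.+1, (i != ord_max) ==> ((y i : nat) == ((x i : nat) + x ord_max) %% q)%N]
     && (y ord_max == x ord_max))%:R).

Definition zeta (R : realType) (q : nat) : R[i] :=
  Complex (cos (2 * pi / q%:R)) (sin (2 * pi / q%:R)).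

Definition Hq1 (R : realType) (q : nat) (b a : 'I_q) : R[i] :=
  (Num.sqrt (q%:R : R))^-1%:C * zeta R q ^+ (a * b).

(* (n+1)-fold tensor power H_q^{(x)(n+1)}: in the product basis its matrix
   entries are the products of the single-qudigit entries. *)
Definition Hq_tens (R : realType) (q n : nat) : 'M[R[i]]_#|basis q n| :=
  opmx (fun y x : basis q n => \prod_(i < n.+1) @Hq1 R q (y i) (x i)).

From mathcomp Require Import all_boot all_order all_algebra.
From mathcomp Require Import reals trigo complex.
From mathcomp Require Import ring lra.

(* Index the computational basis by x in (Z/q)^(n+1), with b = x_n. Then F_q and
   M_q are the permutation operators of x |-> (x_i + b, b) and x |-> (x_i, b + sum x_i),
   while H_q^(n+1) has entries q^(-(n+1)/2) zeta^<x,y>; it is invertible because the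
   character sums sum_c zeta^(c k) vanish for k <> 0 in Z/q.  Hence the claim amounts to
   F_q H M_q = H, i.e. to <M x, F^-1 y> = <x, y>: F^-1 subtracts b from every y_i while
   M adds sum_i x_i to x_b, and the two changes of the bilinear form cancel. *)

Set Implicit Arguments.
Unset Strict Implicit.
Unset Printing Implicit Defensive.

Import Order.TTheory GRing.Theory Num.Theory.
Local Open Scope ring_scope.
Local Open Scope complex_scope.

Lemma sum_expr_unity_root (F : idomainType) m (w : F) :
  w ^+ m = 1 -> \sum_(c < m) w ^+ c = if w == 1 then m%:R else 0.
Proof.
move=> wm1; have [->|w_neq1] := eqVneq w 1.
  by under eq_bigr do rewrite expr1n; rewrite sumr_const card_ord.
have /eqP := subrX1 w m; rewrite wm1 subrr eq_sym mulf_eq0 subr_eq0.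
by rewrite (negbTE w_neq1) => /eqP.
Qed.

Lemma val_sum_ord m I (r : seq I) (P : pred I) (F : I -> 'I_m.+1) :
  val (\sum_(j <- r | P j) F j) = ((\sum_(j <- r | P j) val (F j)) %% m.+1)%N.
Proof.
by elim/big_rec2: _ => [|j a b _ IH] /=; rewrite ?mod0n // IH modnDmr.
Qed.

Section Zeta.
Variable R : realType.

Lemma zeta_expr q k : zeta R q ^+ k =
  Complex (cos ((2 * pi / q%:R) *+ k)) (sin ((2 * pi / q%:R) *+ k)).
Proof.
elim: k => [|k IHk]; first by rewrite expr0 !mulr0n cos0 sin0.
rewrite exprS IHk /zeta; set t := 2 * pi / q%:R.
by rewrite mulrS cosD sinD (addrC (sin t * _)).
Qed.

Lemma zeta_expr_order q : (0 < q)%N -> zeta R q ^+ q = 1.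
Proof.
move=> q_gt0; rewrite zeta_expr.
have -> : (2 * pi / q%:R) *+ q = pi *+ 2 :> R.
  by rewrite -mulr_natr divfK ?mulr_natl // pnatr_eq0 -lt0n.
by rewrite cos2pi sin2pi.
Qed.

Lemma zeta_expr_neq1 q m : (0 < m < q)%N -> zeta R q ^+ m != 1.
Proof.
case/andP=> m_gt0 m_lt_q; have q_gt0 := leq_trans m_gt0 (ltnW m_lt_q).
pose x : R := pi * m%:R / q%:R.
have x_gt0 : 0 < x by rewrite divr_gt0 ?mulr_gt0 ?pi_gt0 ?ltr0n.
have x_lt_pi : x < pi by rewrite ltr_pdivrMr ?ltr0n // ltr_pM2l ?pi_gt0 ?ltr_nat.
rewrite zeta_expr; have -> : (2 * pi / q%:R) *+ m = x *+ 2.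
  by rewrite -[_ *+ m]mulr_natr -[_ *+ 2]mulr_natr /x; field; rewrite pnatr_eq0 -lt0n.
(* cos (2x) = 1 would force cos x = +-1, hence sin x = 0, but 0 < x < pi. *)
rewrite cos_mulr2n; apply/negP => /eqP/(congr1 (@complex.Re R)) /= cos2x.
have /eqP : sin x ^+ 2 = 0 by rewrite sin2cos2; move: cos2x; rewrite -mulr_natr; lra.
by rewrite expf_eq0 /= gt_eqF // sin_gt0_pi ?x_gt0.
Qed.

Lemma zeta_prim_root q : (0 < q)%N -> q.-primitive_root (zeta R q).
Proof.
move=> q_gt0.
have [m prim_m m_dvd_q] := prim_order_exists q_gt0 (zeta_expr_order q_gt0).
have [m_lt_q|q_lt_m|eq_mq] := ltngtP m q; last by rewrite -{1}eq_mq.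
  have := @zeta_expr_neq1 q m; rewrite (prim_order_gt0 prim_m) m_lt_q.
  by rewrite prim_expr_order // eqxx => /(_ isT).
by rewrite ltnNge dvdn_leq in q_lt_m.
Qed.

End Zeta.

Section Operators.
Variables (R : realType) (q n : nat).
Local Notation basis := (basis q n).

Lemma eq_opmx (A B : basis -> basis -> R[i]) : A =2 B -> opmx A = opmx B.
Proof. by move=> eqAB; apply/matrixP => i j; rewrite !mxE eqAB. Qed.

Lemma opmxM (A B : basis -> basis -> R[i]) :
  opmx A *m opmx B = opmx (fun y x => \sum_z A y z * B z x).
Proof.
apply/matrixP => i j; rewrite !mxE (reindex (@enum_val basis predT)) /=.
  by apply: eq_bigr => k _; rewrite !mxE.
by apply: onW_bij; apply: enum_val_bij.
Qed.

Lemma opmx_delta :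
  opmx (fun y x : basis => (y == x)%:R) = 1%:M :> 'M[R[i]]_#|basis|.
Proof. by apply/matrixP => i j; rewrite !mxE (inj_eq enum_val_inj). Qed.

Definition permop (f : basis -> basis) := opmx (fun y x => (y == f x)%:R : R[i]).

Lemma mulmx_permop A f : opmx A *m permop f = opmx (fun y x => A y (f x)).
Proof.
rewrite opmxM; apply: eq_opmx => y x; rewrite (bigD1 (f x)) //= eqxx mulr1.
by rewrite big1 ?addr0 // => z /negbTE->; rewrite mulr0.
Qed.

Lemma permop_mulmx A f g : cancel f g -> cancel g f ->
  permop f *m opmx A = opmx (fun y x => A (g y) x).
Proof.
move=> fK gK; rewrite opmxM; apply: eq_opmx => y x.
rewrite (bigD1 (g y)) //= gK eqxx mul1r big1 ?addr0 // => z neq_z.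
have [eq_y|_] := eqVneq y (f z); last by rewrite mul0r.
by rewrite eq_y fK eqxx in neq_z.
Qed.

Lemma permop_unit f g : cancel g f -> permop f \in unitmx.
Proof.
move=> gK; have: permop f *m permop g = 1%:M.
  by rewrite mulmx_permop -opmx_delta; apply: eq_opmx => y x; rewrite gK.
by case/mulmx1_unit.
Qed.

Definition tensop (A : 'I_q -> 'I_q -> R[i]) :=
  opmx (fun y x : basis => \prod_i A (y i) (x i)).

Lemma tensopM A B :
  tensop A *m tensop B = tensop (fun b a => \sum_c A b c * B c a).
Proof.
rewrite opmxM; apply: eq_opmx => y x; rewrite bigA_distr_bigA /=.
by apply: eq_bigr => z _; rewrite -big_split.
Qed.

Lemma tensop_delta : tensop (fun b a => (b == a)%:R) = 1%:M.
Proof.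
rewrite -opmx_delta; apply: eq_opmx => y x.
have [<-|neq_yx] := eqVneq y x; first by rewrite big1 // => i _; rewrite eqxx.
have [i neq_i] : exists i, y i != x i.
  apply/existsP; apply: contraNT neq_yx => /existsPn eq_yx.
  by apply/eqP; apply/ffunP => i; apply/eqP/negPn/eq_yx.
by rewrite (bigD1 i) //= (negbTE neq_i) mul0r.
Qed.

End Operators.

Section Qudigits.
Variables (R : realType) (p n : nat).
Local Notation q := p.+2.
Local Notation basis := (basis q n).
Local Notation zeta := (zeta R q).

Let zeta_prim : q.-primitive_root zeta. Proof. exact: zeta_prim_root. Qed.

Definition zchar (k : 'I_q) : R[i] := zeta ^+ k.

Lemma zchar_mul (a b : 'I_q) : zchar (a * b) = zeta ^+ (a * b).
Proof. exact: prim_expr_mod. Qed.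

Lemma zcharD : {morph zchar : a b / a + b >-> a * b}.
Proof. by move=> a b; rewrite /zchar /= prim_expr_mod ?exprD. Qed.

Lemma zchar0 : zchar 0 = 1. Proof. exact: expr0. Qed.

Lemma sum_zchar_mul (k : 'I_q) :
  \sum_(c : 'I_q) zchar (c * k) = if k == 0 then q%:R else 0.
Proof.
under eq_bigr do rewrite zchar_mul mulnC exprM.
rewrite sum_expr_unity_root; last first.
  by rewrite exprAC (prim_expr_order zeta_prim) expr1n.
by rewrite -(prim_order_dvd zeta_prim) /dvdn modn_small.
Qed.

Lemma invsqrt_sqr :
  (Num.sqrt (q%:R : R))^-1%:C * (Num.sqrt (q%:R : R))^-1%:C = q%:R^-1.
Proof.
rewrite -rmorphM -expr2 exprVn sqr_sqrtr ?ler0n //.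
by rewrite rmorphV ?rmorph_nat // unitfE pnatr_eq0.
Qed.

Lemma Hq1E b a : @Hq1 R q b a = (Num.sqrt (q%:R : R))^-1%:C * zchar (a * b).
Proof. by rewrite zchar_mul. Qed.

Definition Hq1_adj (b a : 'I_q) : R[i] :=
  (Num.sqrt (q%:R : R))^-1%:C * zchar (- (a * b)).

Lemma Hq1_orthogonal b a : \sum_c @Hq1 R q b c * Hq1_adj c a = (b == a)%:R.
Proof.
under eq_bigr => c _ do rewrite Hq1E mulrACA -zcharD (mulrC a) -mulrBr.
rewrite -big_distrr sum_zchar_mul subr_eq0 invsqrt_sqr.
by case: (b == a) => /=; [rewrite mulVf ?pnatr_eq0 | rewrite mulr0].
Qed.

Lemma Hq_tens_unit : Hq_tens R q n \in unitmx.
Proof.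
have: Hq_tens R q n *m tensop n Hq1_adj = 1%:M.
  rewrite [Hq_tens R q n]/(tensop n _) tensopM -tensop_delta.
  by apply: eq_opmx => y x; apply: eq_bigr => i _; apply: Hq1_orthogonal.
by case/mulmx1_unit.
Qed.

Definition dot (x y : basis) : 'I_q := \sum_i x i * y i.

Lemma Hq_tens_dot : Hq_tens R q n =
  opmx (fun y x => (Num.sqrt (q%:R : R))^-1%:C ^+ n.+1 * zchar (dot x y)).
Proof.
apply: eq_opmx => y x; under eq_bigr do rewrite Hq1E.
by rewrite big_split /= prodr_const card_ord (big_morph zchar zcharD zchar0).
Qed.

Definition fanout (x : basis) : basis :=
  [ffun i => if i == ord_max then x i else x i + x ord_max].
Definition unfanout (y : basis) : basis :=
  [ffun i => if i == ord_max then y i else y i - y ord_max].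
Definition modadd (x : basis) : basis :=
  [ffun i => if i == ord_max then x i + \sum_(j | j != ord_max) x j else x i].

Lemma fanoutK : cancel fanout unfanout.
Proof.
by move=> x; apply/ffunP => i; rewrite !ffunE eqxx; case: eqP => // _; apply: addrK.
Qed.

Lemma unfanoutK : cancel unfanout fanout.
Proof.
by move=> y; apply/ffunP => i; rewrite !ffunE eqxx; case: eqP => // _; apply: subrK.
Qed.

Lemma Fq_mx_permop : Fq_mx R q n = permop R fanout.
Proof.
apply: eq_opmx => y x; congr (nat_of_bool _)%:R.
apply/andP/eqP => [[/forallP eq_y /eqP eq_b]|->].
  apply/ffunP => i; rewrite ffunE; case: eqP => [->//|/eqP ne_i].
  by apply: val_inj; apply/eqP/(implyP (eq_y i) ne_i).
rewrite ffunE eqxx; split=> //; apply/forallP => i; apply/implyP => ne_i.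
by rewrite ffunE (negbTE ne_i).
Qed.

Lemma Mq_mx_permop : Mq_mx R q n = permop R modadd.
Proof.
apply: eq_opmx => y x; congr (nat_of_bool _)%:R.
have val_b : val (modadd x ord_max) = ((x ord_max + sumx x) %% q)%N.
  by rewrite ffunE eqxx /= val_sum_ord modnDmr.
apply/andP/eqP => [[/forallP eq_y /eqP eq_b]|->].
  apply/ffunP => i; case: (eqVneq i ord_max) => [->|ne_i].
    by apply: val_inj; rewrite val_b.
  by rewrite ffunE (negbTE ne_i); apply: val_inj; apply/eqP/(implyP (eq_y i) ne_i).
rewrite val_b; split=> //; apply/forallP => i; apply/implyP => ne_i.
by rewrite ffunE (negbTE ne_i).
Qed.

Lemma dot_modadd_unfanout x y : dot (modadd x) (unfanout y) = dot x y.
Proof.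
rewrite /dot (bigD1 ord_max) // [RHS](bigD1 ord_max) //= !ffunE eqxx.
rewrite mulrDl big_distrl -addrA; congr (_ + _).
rewrite -big_split /=; apply: eq_bigr => i ne_i.
by rewrite !ffunE (negbTE ne_i) mulrBr addrC subrK.
Qed.

End Qudigits.

Theorem mainTheorem3 (R : realType) (q n : nat) :
  (2 <= q)%N -> (1 <= n)%N ->
  Mq_mx R q n = invmx (Hq_tens R q n) *m invmx (Fq_mx R q n) *m Hq_tens R q n.
Proof.
(* With q = p.+2, 'I_q is the ring Z/q; the identity holds for n = 0 as well. *)
case: q => [|[|p]] // _ _.
rewrite Fq_mx_permop Mq_mx_permop.
have HU := Hq_tens_unit R p n; have FU := permop_unit R (@unfanoutK p n).
suff FHM : permop R (@fanout p n) *m Hq_tens R p.+2 n *m permop R (@modadd p n) =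
             Hq_tens R p.+2 n.
  by rewrite -{2}FHM !mulmxA -(mulmxA _ (invmx _)) mulVmx // mulmx1 mulVmx // mul1mx.
rewrite Hq_tens_dot (permop_mulmx _ (@fanoutK _ _) (@unfanoutK _ _)) mulmx_permop.
by apply: eq_opmx => y x; rewrite dot_modadd_unfanout.
Qed.
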